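(* Let $H=\mathbb{R}^n$ be the (not necessarily orthogonal) direct sum of two subspaces $X$ and $Y$. If $\mathcal{F}_1$ is a frame for $X$ with the exact PR-redundancy property and $\mathcal{F}_2$ is a frame for $Y$ with the exact PR-redundancy property, then $\mathcal{F}=\mathcal{F}_1\cup\mathcal{F}_2$ is a frame for $H$ with the exact PR-redundancy property.
   Context: For a finite-dimensional real inner product space $V$ (here $V=X$, $Y$, or $H$ with the inner product inherited from $\mathbb{R}^n$), a frame $\mathcal{G}=\{g_i\}_{i=1}^N$ for $V$ is a finite sequence in $V$ spanning $V$. Let $\mathcal{S}_2(V)$ be the set of self-adjoint operators on $V$ of rank at most $2$, and for $\Lambda\subseteq\{1,\dots,N\}$ let $\Theta_{L(\mathcal{G}_\Lambda)}(A)=(\langle Ag_i,g_i\rangle)_{i\in\Lambda}$ for self-adjoint $A$ on $V$. $\mathcal{G}$ has the exact PR-redundancy property (as a frame for $V$) if for every proper subset $\Lambda\subsetneq\{1,\dots,N\}$, $\ker(\Theta_{L(\mathcal{G}_\Lambda)})\cap\mathcal{S}_2(V)\neq\ker(\Theta_{L(\mathcal{G})})\cap\mathcal{S}_2(V)$. The union $\mathcal{F}_1\cup\mathcal{F}_2$ means the concatenated sequence. *)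

From HB Require Import structures.
From mathcomp Require Import all_boot all_order all_algebra.
From mathcomp Require Import reals.
Set Implicit Arguments. Unset Strict Implicit. Unset Printing Implicit Defensive.
Import Order.TTheory GRing.Theory Num.Theory.
Local Open Scope ring_scope.

(* Conventions:
   - vectors of R^n are row vectors 'rV[R]_n; the standard inner product is
     <u, v> = (u *m v^T) 0 0.
   - a subspace V of R^n is the row space of a matrix V : 'M[R]_n.
   - a finite sequence {g_i}_{i<N} in R^n is the matrix G : 'M[R]_(N, n)
     whose i-th row is g_i; concatenation F1 \cup F2 is col_mx F1 F2.
   - a self-adjoint operator on V (for the inherited inner product) is
     represented by its canonical extension to R^n that is zero on V^perp:
     a symmetric n x n matrix whose row space is contained in V.  This is a
     bijection between self-adjoint operators on V and such matrices,
     preserving rank and the quadratic form <A g, g> for g in V. *)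

Definition inner (R : realType) (n : nat) (u v : 'rV[R]_n) : R :=
  (u *m v^T) 0 0.

Definition frame_for (R : realType) (n N : nat) (V : 'M[R]_n)
  (G : 'M[R]_(N, n)) : bool := (G == V)%MS.

Definition selfadj_on (R : realType) (n : nat) (V : 'M[R]_n) (A : 'M[R]_n)
  : bool := (A^T == A) && (A <= V)%MS.

(* ker(Theta_{L(G_Lambda)}) \cap S_2(V), as a predicate on representing
   matrices *)
Definition kerS2 (R : realType) (n N : nat) (V : 'M[R]_n)
  (G : 'M[R]_(N, n)) (L : {set 'I_N}) : pred 'M[R]_n :=
  fun A => [&& selfadj_on V A, (\rank A <= 2)%N &
              [forall i in L, inner (row i G *m A) (row i G) == 0]].

Definition exact_PR_redundancy (R : realType) (n N : nat) (V : 'M[R]_n)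
  (G : 'M[R]_(N, n)) : Prop :=
  forall L : {set 'I_N}, L \proper [set: 'I_N] ->
    kerS2 V G L <> kerS2 V G [set: 'I_N].

From HB Require Import structures.
From mathcomp Require Import all_boot all_order all_algebra.
From mathcomp Require Import reals.
From Stdlib Require Import Classical FunctionalExtensionality.
Import Order.TTheory GRing.Theory Num.Theory.
Local Open Scope ring_scope.

(* Suppose the index i of the union lies outside L, say in the block of F1.
   Restrict L to F1; exact PR-redundancy of F1 yields a self-adjoint A of rank
   at most 2 on X whose quadratic form vanishes on the restricted frame
   vectors but not on all of F1.  Pulling A back along the projection P onto
   X parallel to Y, i.e. B = P A P^T, gives <B g, g> = <A (g P), g P>, which
   agrees with A on F1 and vanishes on F2.  So B separates the two kernels
   of the union. *)

Section PRRedundancy.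
Set Implicit Arguments. Unset Strict Implicit.
Variables (R : realType) (n : nat).

Lemma frame_for_col_mx (X Y : 'M[R]_n) N1 N2 (F1 : 'M_(N1, n))
    (F2 : 'M_(N2, n)) :
  frame_for X F1 -> frame_for Y F2 -> frame_for (X + Y)%MS (col_mx F1 F2).
Proof.
move=> /eqmxP F1X /eqmxP F2Y; apply/eqmxP.
exact: eqmx_trans (eqmx_sym (addsmxE F1 F2)) (adds_eqmx F1X F2Y).
Qed.

Lemma exact_PR_redundancy_witness (V : 'M[R]_n) N (G : 'M_(N, n))
    (L : {set 'I_N}) :
  exact_PR_redundancy V G -> L \proper [set: 'I_N] ->
  exists A, kerS2 V G L A && ~~ kerS2 V G [set: 'I_N] A.
Proof.
move=> PR_G properL; apply: NNPP => no_witness; apply: (PR_G L properL).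
apply: functional_extensionality => A; apply/idP/idP => [kerL_A | ].
  by apply/negPn/negP => kerT_A; apply: no_witness; exists A; rewrite kerL_A.
case/and3P=> sA rA /forall_inP kerT_A.
by apply/and3P; split=> //; apply/forall_inP => i _; apply: kerT_A.
Qed.

Definition congr_mx (P A : 'M[R]_n) := P *m A *m P^T.

Lemma inner_congr_mx (P A : 'M[R]_n) (g : 'rV_n) :
  inner (g *m congr_mx P A) g = inner (g *m P *m A) (g *m P).
Proof. by rewrite /inner /congr_mx trmx_mul !mulmxA. Qed.

Lemma selfadj_congr_mx (W P A : 'M[R]_n) :
  (P^T <= W)%MS -> A^T = A -> selfadj_on W (congr_mx P A).
Proof.
move=> PW symA; rewrite /selfadj_on (submx_trans (submxMl _ _) PW) andbT.
by rewrite /congr_mx !trmx_mul trmxK symA mulmxA.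
Qed.

Lemma rank_congr_mx (P A : 'M[R]_n) : (\rank (congr_mx P A) <= \rank A)%N.
Proof. exact: leq_trans (mxrankM_maxl _ _) (mxrankM_maxr _ _). Qed.

Section SubFamily.
Variables (N M : nat) (V W P : 'M[R]_n) (G : 'M[R]_(N, n)) (F : 'M[R]_(M, n)).
Variable e : 'I_N -> 'I_M.
Hypothesis PW : (P^T <= W)%MS.
Hypothesis Fe_proj : forall j, row (e j) F *m P = row j G.
Hypothesis Fout_proj : forall i, i \notin codom e -> row i F *m P = 0.

Lemma kerS2_congr_mx (L : {set 'I_M}) (A : 'M[R]_n) :
  selfadj_on V A -> (\rank A <= 2)%N ->
  kerS2 W F L (congr_mx P A) = kerS2 V G (e @^-1: L) A.
Proof.
move=> sA rA; have /andP[/eqP symA _] := sA.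
rewrite /kerS2 sA rA selfadj_congr_mx // (leq_trans (rank_congr_mx _ _) rA).
apply/forall_inP/forall_inP => kerA i iL.
  by rewrite inE in iL; rewrite -Fe_proj -inner_congr_mx kerA.
rewrite inner_congr_mx; have [/codomP[k eik] | iNe] := boolP (i \in codom e).
  by rewrite eik Fe_proj kerA // inE -eik.
by rewrite Fout_proj // /inner !mul0mx mxE.
Qed.

Lemma kerS2_neq_subfamily (L : {set 'I_M}) (j : 'I_N) :
  exact_PR_redundancy V G -> e j \notin L ->
  kerS2 W F L <> kerS2 W F [set: 'I_M].
Proof.
move=> PR_G ejL; have properL : e @^-1: L \proper [set: 'I_N].
  by apply/properP; split; [exact: subsetT | exists j; rewrite ?inE].
have [A /andP[kerL_A kerT_A]] := exact_PR_redundancy_witness PR_G properL.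
have /and3P[sA rA _] := kerL_A.
move=> kerL_eq_kerT.
have := congr1 (fun K : pred _ => K (congr_mx P A)) kerL_eq_kerT.
by rewrite !kerS2_congr_mx // preimsetT kerL_A (negbTE kerT_A).
Qed.

End SubFamily.
End PRRedundancy.

Theorem lemma1p8 (R : realType) (n N1 N2 : nat) (X Y : 'M[R]_n)
  (F1 : 'M[R]_(N1, n)) (F2 : 'M[R]_(N2, n)) :
  (addsmx X Y == 1%:M)%MS -> (capmx X Y <= (0 : 'M[R]_n))%MS ->
  frame_for X F1 -> exact_PR_redundancy X F1 ->
  frame_for Y F2 -> exact_PR_redundancy Y F2 ->
  frame_for 1%:M (col_mx F1 F2) /\ exact_PR_redundancy 1%:M (col_mx F1 F2).
Proof.
move=> /eqmxP XY1; rewrite submx0 => /eqP dXY F1X PR1 F2Y PR2.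
have dYX : (Y :&: X = 0)%MS by rewrite capmxC.
have rowF1 j : (row j F1 <= X)%MS by rewrite -(eqmxP F1X) row_sub.
have rowF2 j : (row j F2 <= Y)%MS by rewrite -(eqmxP F2Y) row_sub.
split.
  by apply/eqmxP; apply: eqmx_trans XY1; apply/eqmxP; exact: frame_for_col_mx.
move=> L /properP[_ [i _ iL]].
case: (split_ordP i) iL => j -> jL.
- apply: (kerS2_neq_subfamily (P := proj_mx X Y) _ _ _ PR1 jL) => [|k|l].
  + exact: submx1.
  + by rewrite rowKu proj_mx_id.
  + case: (split_ordP l) => k ->; first by rewrite codom_f.
    by rewrite rowKd proj_mx_0.
- apply: (kerS2_neq_subfamily (P := proj_mx Y X) _ _ _ PR2 jL) => [|k|l].
  + exact: submx1.
  + by rewrite rowKd proj_mx_id.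
  + case: (split_ordP l) => k ->; last by rewrite codom_f.
    by rewrite rowKu proj_mx_0.
Qed.
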